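(* The following hold in $VSPG_n$, with all indices distinct elements of $\{1,\dots,n\}$: (i) If $\max\{i,j\}<\max\{k,l\}$, then $\alpha^{\beta}=\alpha^{\beta^{-1}}=\alpha$ for $\alpha\in\{\mu_{kl},\gamma_{kl}\}$, $\beta\in\{\mu_{ij},\gamma_{ij}\}$. In (ii)–(v) assume $k>\max\{i,j\}$. (ii) $\mu_{ik}^{\mu_{ij}}=\mu_{kj}^{\mu_{ij}}\mu_{ik}\mu_{kj}^{-1}$; $\mu_{ik}^{\mu_{ij}^{-1}}=\mu_{kj}^{-1}\mu_{ik}\mu_{kj}^{\mu_{ij}^{-1}}$; $\mu_{ik}^{\gamma_{ij}}=\gamma_{jk}^{-\gamma_{ij}}\mu_{kj}^{-\gamma_{ij}}\gamma_{kj}^{\gamma_{ij}}\mu_{ik}\mu_{jk}$; $\mu_{ik}^{\bar\gamma_{ij}}=\mu_{jk}\mu_{ik}\gamma_{jk}^{-\bar\gamma_{ij}}\mu_{kj}^{-\bar\gamma_{ij}}\gamma_{kj}^{\bar\gamma_{ij}}$; $\gamma_{ik}^{\mu_{ij}}=\mu_{kj}^{\mu_{ij}}\gamma_{ik}\mu_{kj}^{-1}$; $\gamma_{ik}^{\mu_{ij}^{-1}}=\mu_{kj}^{-1}\gamma_{ik}\mu_{kj}^{\mu_{ij}^{-1}}$. (iii) $\mu_{ki}^{\mu_{ij}}=\mu_{kj}\mu_{ki}\mu_{kj}^{-\mu_{ij}}$; $\mu_{ki}^{\mu_{ij}^{-1}}=\mu_{kj}^{-\mu_{ij}^{-1}}\mu_{ki}\mu_{kj}$;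 $\mu_{ki}^{\gamma_{ij}}=\mu_{kj}\mu_{ki}\mu_{kj}^{-\gamma_{ij}}$; $\mu_{ki}^{\bar\gamma_{ij}}=\mu_{kj}^{-\bar\gamma_{ij}}\mu_{ki}\mu_{kj}$; $\gamma_{ki}^{\mu_{ij}}=\mu_{kj}\gamma_{ki}\mu_{kj}^{-\mu_{ij}}$; $\gamma_{ki}^{\mu_{ij}^{-1}}=\mu_{kj}^{-\mu_{ij}^{-1}}\gamma_{ki}\mu_{kj}$. (iv) $\mu_{jk}^{\mu_{ij}}=\mu_{ik}\mu_{jk}\mu_{kj}\mu_{ik}^{-1}\mu_{kj}^{-\mu_{ij}}$; $\mu_{jk}^{\mu_{ij}^{-1}}=\mu_{kj}^{-\mu_{ij}^{-1}}\mu_{ik}^{-1}\mu_{kj}\mu_{jk}\mu_{ik}$; $\mu_{jk}^{\gamma_{ij}}=\gamma_{jk}^{\gamma_{ij}}\mu_{kj}^{\gamma_{ij}}\gamma_{kj}^{-\gamma_{ij}}$; $\mu_{jk}^{\bar\gamma_{ij}}=\gamma_{jk}^{\bar\gamma_{ij}}\mu_{kj}^{\bar\gamma_{ij}}\gamma_{kj}^{-\bar\gamma_{ij}}$; $\gamma_{jk}^{\mu_{ij}}=\mu_{ik}\gamma_{jk}\mu_{kj}\mu_{ik}^{-1}\mu_{kj}^{-\mu_{ij}}$; $\gamma_{jk}^{\mu_{ij}^{-1}}=\mu_{kj}^{-\mu_{ij}^{-1}}\mu_{ik}^{-1}\mu_{kj}\gamma_{jk}\mu_{ik}$. (v) $\gamma_{kj}^{\mu_{ij}}=\mu_{kj}^{\mu_{ij}}\mu_{ik}\mu_{kj}^{-1}\gamma_{kj}\mu_{ik}^{-1}$;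 $\gamma_{kj}^{\mu_{ij}^{-1}}=\mu_{ik}^{-1}\gamma_{kj}\mu_{kj}^{-1}\mu_{ik}\mu_{kj}^{\mu_{ij}^{-1}}$.
   Context: $VSPG_n$ is the group generated by $\{\mu_{ij},\gamma_{ij}\mid 1\le i\ne j\le n\}$ with defining relations (distinct letters denote distinct indices): $\mu_{ij}\mu_{ik}\mu_{jk}=\mu_{jk}\mu_{ik}\mu_{ij}$; $\mu_{ij}\mu_{ik}\gamma_{jk}=\gamma_{jk}\mu_{ik}\mu_{ij}$; $\gamma_{ij}\mu_{ik}\mu_{jk}=\mu_{jk}\mu_{ik}\gamma_{ij}$; $\mu_{ij}\gamma_{ji}=\gamma_{ij}\mu_{ji}$; $\mu_{ij}\mu_{kl}=\mu_{kl}\mu_{ij}$, $\gamma_{ij}\gamma_{kl}=\gamma_{kl}\gamma_{ij}$, $\mu_{ij}\gamma_{kl}=\gamma_{kl}\mu_{ij}$. (It is the kernel of the permutation homomorphism on the virtual singular braid group $VSG_n$, and $\mu_{ij},\gamma_{ij}$ are the generalized fusing strings.) Notation: $\bar\gamma_{ij}:=\gamma_{ij}^{-1}$; $a^b:=b^{-1}ab$; $a^{-b}:=(a^{-1})^b$. *)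

From Stdlib Require Import Arith.

Record Grp := {
  car :> Type;
  gmul : car -> car -> car;
  gone : car;
  ginv : car -> car;
  gmulA : forall a b c, gmul a (gmul b c) = gmul (gmul a b) c;
  gmul1g : forall a, gmul gone a = a;
  gmulg1 : forall a, gmul a gone = a;
  gmulVg : forall a, gmul (ginv a) a = gone;
  gmulgV : forall a, gmul a (ginv a) = gone
}.

Arguments gmul {g} _ _.
Arguments gone {g}.
Arguments ginv {g} _.

Declare Scope grp_scope.
Delimit Scope grp_scope with grp.
Notation "x * y" := (gmul x y) (at level 40, left associativity) : grp_scope.
Local Open Scope grp_scope.

(* a^b := b^{-1} a b *)
Definition cj {G : Grp} (a b : G) : G := ginv b * a * b.
(* a^{-b} := (a^{-1})^b *)
Definition cjn {G : Grp} (a b : G) : G := cj (ginv a) b.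

Definition idx (n i : nat) : Prop := (1 <= i /\ i <= n)%nat.

Definition VSPG_rels (G : Grp) (n : nat) (mu gam : nat -> nat -> G) : Prop :=
  (forall i j k, idx n i -> idx n j -> idx n k -> i <> j -> i <> k -> j <> k ->
     mu i j * mu i k * mu j k = mu j k * mu i k * mu i j /\
     mu i j * mu i k * gam j k = gam j k * mu i k * mu i j /\
     gam i j * mu i k * mu j k = mu j k * mu i k * gam i j) /\
  (forall i j, idx n i -> idx n j -> i <> j ->
     mu i j * gam j i = gam i j * mu j i) /\
  (forall i j k l, idx n i -> idx n j -> idx n k -> idx n l ->
     i <> j -> i <> k -> i <> l -> j <> k -> j <> l -> k <> l ->
     mu i j * mu k l = mu k l * mu i j /\
     gam i j * gam k l = gam k l * gam i j /\
     mu i j * gam k l = gam k l * mu i j).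

(** A relation [x y z = z y x] can be
    solved for the conjugate of any of its letters by another, and [a b = c d]
    expresses each letter through the other three; since conjugation is an
    automorphism, each identity of (ii)-(v) follows from one or two such
    rewrites, and (i) from the commutations. *)
From Stdlib Require Import Arith.
Local Open Scope grp_scope.

Section GroupFacts.
Context {G : Grp}.
Implicit Types a b c d : G.

Lemma mulKg a b : a * (ginv a * b) = b.
Proof. rewrite gmulA, gmulgV, gmul1g. reflexivity. Qed.

Lemma mulVKg a b : ginv a * (a * b) = b.
Proof. rewrite gmulA, gmulVg, gmul1g. reflexivity. Qed.

Lemma mulg_injl a b c : a * b = a * c -> b = c.
Proof. intro E. rewrite <- (mulVKg a b), E. apply mulVKg. Qed.

Lemma mulg_injr a b c : b * a = c * a -> b = c.
Proof.
  intro E. rewrite <- (gmulg1 _ b), <- (gmulgV _ a), gmulA, E, <- gmulA, gmulgV.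
  apply gmulg1.
Qed.

Lemma ginv_unique a b : a * b = gone -> ginv a = b.
Proof. intro E. apply (mulg_injl a). rewrite gmulgV, E. reflexivity. Qed.

Lemma ginv_mul a b : ginv (a * b) = ginv b * ginv a.
Proof.
  apply ginv_unique. rewrite <- gmulA, mulKg, gmulgV. reflexivity.
Qed.

Lemma ginv_inv a : ginv (ginv a) = a.
Proof. apply ginv_unique, gmulVg. Qed.

Lemma cj_mul a b c : cj (a * b) c = cj a c * cj b c.
Proof. unfold cj. rewrite <- !gmulA, (gmulA _ c), gmulgV, gmul1g. reflexivity. Qed.

Lemma cj_ginv a c : cj (ginv a) c = ginv (cj a c).
Proof. unfold cj. rewrite !ginv_mul, ginv_inv, gmulA. reflexivity. Qed.

Lemma cj_commute a b : b * a = a * b -> cj a b = a /\ cj a (ginv b) = a.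
Proof.
  unfold cj; intro E; split.
  - rewrite <- gmulA, <- E. apply mulVKg.
  - rewrite ginv_inv, E, <- gmulA, gmulgV, gmulg1. reflexivity.
Qed.

Lemma ginv_of_mul_eq {a b c d : G} : a * b = c * d -> ginv d = ginv b * ginv a * c.
Proof.
  intro E. apply (mulg_injl d).
  rewrite gmulgV, <- ginv_mul, E, ginv_mul, <- !gmulA, gmulVg, gmulg1, gmulgV.
  reflexivity.
Qed.

End GroupFacts.

Ltac gsimpl :=
  repeat first [ rewrite ginv_mul | rewrite ginv_inv
               | rewrite <- gmulA | rewrite mulKg | rewrite mulVKg
               | rewrite gmulgV | rewrite gmulVg | rewrite gmul1g | rewrite gmulg1 ].

Section ReversibleTriple.
Context {G : Grp} {x y z : G} (rxyz : x * y * z = z * y * x).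

Lemma rev3_tail (w : G) : x * (y * (z * w)) = z * (y * (x * w)).
Proof. rewrite !gmulA, rxyz. reflexivity. Qed.

Lemma rev3_outer_cj_mid : cj x y = cj z y * x * ginv z.
Proof. unfold cj; gsimpl. rewrite <- rev3_tail; gsimpl. reflexivity. Qed.

Lemma rev3_outer_cjV_mid : cj x (ginv y) = ginv z * x * cj z (ginv y).
Proof. unfold cj; gsimpl. rewrite rev3_tail; gsimpl. reflexivity. Qed.

Lemma rev3_outer_cjn_mid : cjn x y = z * ginv x * cjn z y.
Proof. unfold cjn. rewrite !cj_ginv, rev3_outer_cj_mid; gsimpl. reflexivity. Qed.

Lemma rev3_outer_cjnV_mid : cjn x (ginv y) = cjn z (ginv y) * ginv x * z.
Proof. unfold cjn. rewrite !cj_ginv, rev3_outer_cjV_mid; gsimpl. reflexivity. Qed.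

Lemma rev3_outer_cj_outer : cj x z = y * x * cjn y z.
Proof.
  apply (mulg_injl z). unfold cjn, cj; gsimpl.
  rewrite <- rev3_tail; gsimpl. reflexivity.
Qed.

Lemma rev3_outer_cjV_outer : cj x (ginv z) = cjn y (ginv z) * x * y.
Proof.
  apply (mulg_injl (ginv z)). unfold cjn, cj; gsimpl.
  apply (mulg_injl y). apply (mulg_injl z). rewrite <- rev3_tail; gsimpl. reflexivity.
Qed.

Lemma rev3_mid_cj_outer : cj y x = cjn z x * y * z.
Proof.
  unfold cjn, cj; gsimpl. apply f_equal.
  apply (mulg_injl z); gsimpl. rewrite !gmulA. symmetry; exact rxyz.
Qed.

Lemma rev3_mid_cjV_outer : cj y (ginv x) = z * y * cjn z (ginv x).
Proof.
  apply (mulg_injr x). apply (mulg_injr z). unfold cjn, cj; gsimpl.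
  rewrite !gmulA. exact rxyz.
Qed.

End ReversibleTriple.

Section ConjugationFormulas.
Context {G : Grp} {m g : nat -> nat -> G} {i j k : nat}.

Hypothesis Hmmm_ijk : m i j * m i k * m j k = m j k * m i k * m i j.
Hypothesis Hmmg_ijk : m i j * m i k * g j k = g j k * m i k * m i j.
Hypothesis Hgmm_ijk : g i j * m i k * m j k = m j k * m i k * g i j.
Hypothesis Hmmm_ikj : m i k * m i j * m k j = m k j * m i j * m i k.
Hypothesis Hmmg_ikj : m i k * m i j * g k j = g k j * m i j * m i k.
Hypothesis Hgmm_ikj : g i k * m i j * m k j = m k j * m i j * g i k.
Hypothesis Hmmm_kij : m k i * m k j * m i j = m i j * m k j * m k i.
Hypothesis Hmmg_kij : m k i * m k j * g i j = g i j * m k j * m k i.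
Hypothesis Hgmm_kij : g k i * m k j * m i j = m i j * m k j * g k i.
Hypothesis Hmg_jk : m j k * g k j = g j k * m k j.
Hypothesis Hmg_kj : m k j * g j k = g k j * m j k.

Lemma conj_formulas_ii :
  cj (m i k) (m i j) = cj (m k j) (m i j) * m i k * ginv (m k j) /\
  cj (m i k) (ginv (m i j)) = ginv (m k j) * m i k * cj (m k j) (ginv (m i j)) /\
  cj (m i k) (g i j) = cjn (g j k) (g i j) * cjn (m k j) (g i j) * cj (g k j) (g i j)
                         * m i k * m j k /\
  cj (m i k) (ginv (g i j)) = m j k * m i k * cjn (g j k) (ginv (g i j))
                         * cjn (m k j) (ginv (g i j)) * cj (g k j) (ginv (g i j)) /\
  cj (g i k) (m i j) = cj (m k j) (m i j) * g i k * ginv (m k j) /\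
  cj (g i k) (ginv (m i j)) = ginv (m k j) * g i k * cj (m k j) (ginv (m i j)).
Proof.
  pose proof (ginv_of_mul_eq Hmg_kj) as Vm_jk.
  split; [exact (rev3_outer_cj_mid Hmmm_ikj) |].
  split; [exact (rev3_outer_cjV_mid Hmmm_ikj) |].
  split; [rewrite (rev3_mid_cj_outer Hgmm_ijk); unfold cjn; rewrite Vm_jk, !cj_mul;
          reflexivity |].
  split; [rewrite (rev3_mid_cjV_outer Hgmm_ijk); unfold cjn; rewrite Vm_jk, !cj_mul, !gmulA;
          reflexivity |].
  split; [exact (rev3_outer_cj_mid Hgmm_ikj) | exact (rev3_outer_cjV_mid Hgmm_ikj)].
Qed.

Lemma conj_formulas_iii :
  cj (m k i) (m i j) = m k j * m k i * cjn (m k j) (m i j) /\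
  cj (m k i) (ginv (m i j)) = cjn (m k j) (ginv (m i j)) * m k i * m k j /\
  cj (m k i) (g i j) = m k j * m k i * cjn (m k j) (g i j) /\
  cj (m k i) (ginv (g i j)) = cjn (m k j) (ginv (g i j)) * m k i * m k j /\
  cj (g k i) (m i j) = m k j * g k i * cjn (m k j) (m i j) /\
  cj (g k i) (ginv (m i j)) = cjn (m k j) (ginv (m i j)) * g k i * m k j.
Proof.
  repeat split;
    first [ exact (rev3_outer_cj_outer Hmmm_kij) | exact (rev3_outer_cjV_outer Hmmm_kij)
          | exact (rev3_outer_cj_outer Hmmg_kij) | exact (rev3_outer_cjV_outer Hmmg_kij)
          | exact (rev3_outer_cj_outer Hgmm_kij) | exact (rev3_outer_cjV_outer Hgmm_kij) ].
Qed.

Lemma conj_formulas_iv :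
  cj (m j k) (m i j) = m i k * m j k * m k j * ginv (m i k) * cjn (m k j) (m i j) /\
  cj (m j k) (ginv (m i j)) = cjn (m k j) (ginv (m i j)) * ginv (m i k) * m k j
                                * m j k * m i k /\
  cj (m j k) (g i j) = cj (g j k) (g i j) * cj (m k j) (g i j) * cjn (g k j) (g i j) /\
  cj (m j k) (ginv (g i j)) = cj (g j k) (ginv (g i j)) * cj (m k j) (ginv (g i j))
                                * cjn (g k j) (ginv (g i j)) /\
  cj (g j k) (m i j) = m i k * g j k * m k j * ginv (m i k) * cjn (m k j) (m i j) /\
  cj (g j k) (ginv (m i j)) = cjn (m k j) (ginv (m i j)) * ginv (m i k) * m k j
                                * g j k * m i k.
Proof.
  assert (Em_jk : m j k = g j k * m k j * ginv (g k j)).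
  { rewrite <- Hmg_jk, <- gmulA, gmulgV, gmulg1. reflexivity. }
  pose proof (rev3_outer_cjn_mid Hmmm_ikj) as Cm_ik.
  pose proof (rev3_outer_cjnV_mid Hmmm_ikj) as CVm_ik.
  split; [rewrite (rev3_outer_cj_outer (eq_sym Hmmm_ijk)), Cm_ik, !gmulA; reflexivity |].
  split; [rewrite (rev3_outer_cjV_outer (eq_sym Hmmm_ijk)), CVm_ik; reflexivity |].
  split; [rewrite Em_jk, !cj_mul; reflexivity |].
  split; [rewrite Em_jk, !cj_mul; reflexivity |].
  split; [rewrite (rev3_outer_cj_outer (eq_sym Hmmg_ijk)), Cm_ik, !gmulA; reflexivity |].
  rewrite (rev3_outer_cjV_outer (eq_sym Hmmg_ijk)), CVm_ik; reflexivity.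
Qed.

Lemma conj_formulas_v :
  cj (g k j) (m i j) = cj (m k j) (m i j) * m i k * ginv (m k j) * g k j * ginv (m i k) /\
  cj (g k j) (ginv (m i j)) = ginv (m i k) * g k j * ginv (m k j) * m i k
                                * cj (m k j) (ginv (m i j)).
Proof.
  split.
  - rewrite (rev3_outer_cj_mid (eq_sym Hmmg_ikj)), (rev3_outer_cj_mid Hmmm_ikj).
    reflexivity.
  - rewrite (rev3_outer_cjV_mid (eq_sym Hmmg_ikj)), (rev3_outer_cjV_mid Hmmm_ikj), !gmulA.
    reflexivity.
Qed.

End ConjugationFormulas.

Theorem mainTheorem8 (G : Grp) (n : nat) (m g : nat -> nat -> G) :
  VSPG_rels G n m g ->
  (* (i) *)
  (forall i j k l, idx n i -> idx n j -> idx n k -> idx n l ->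
     i <> j -> i <> k -> i <> l -> j <> k -> j <> l -> k <> l ->
     (Nat.max i j < Nat.max k l)%nat ->
     forall a b : G, (a = m k l \/ a = g k l) -> (b = m i j \/ b = g i j) ->
       cj a b = a /\ cj a (ginv b) = a) /\
  (forall i j k, idx n i -> idx n j -> idx n k ->
     i <> j -> i <> k -> j <> k -> (Nat.max i j < k)%nat ->
     (* (ii) *)
     (cj (m i k) (m i j) = cj (m k j) (m i j) * m i k * ginv (m k j) /\
      cj (m i k) (ginv (m i j)) = ginv (m k j) * m i k * cj (m k j) (ginv (m i j)) /\
      cj (m i k) (g i j) = cjn (g j k) (g i j) * cjn (m k j) (g i j) * cj (g k j) (g i j)
                             * m i k * m j k /\
      cj (m i k) (ginv (g i j)) = m j k * m i k * cjn (g j k) (ginv (g i j))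
                             * cjn (m k j) (ginv (g i j)) * cj (g k j) (ginv (g i j)) /\
      cj (g i k) (m i j) = cj (m k j) (m i j) * g i k * ginv (m k j) /\
      cj (g i k) (ginv (m i j)) = ginv (m k j) * g i k * cj (m k j) (ginv (m i j))) /\
     (* (iii) *)
     (cj (m k i) (m i j) = m k j * m k i * cjn (m k j) (m i j) /\
      cj (m k i) (ginv (m i j)) = cjn (m k j) (ginv (m i j)) * m k i * m k j /\
      cj (m k i) (g i j) = m k j * m k i * cjn (m k j) (g i j) /\
      cj (m k i) (ginv (g i j)) = cjn (m k j) (ginv (g i j)) * m k i * m k j /\
      cj (g k i) (m i j) = m k j * g k i * cjn (m k j) (m i j) /\
      cj (g k i) (ginv (m i j)) = cjn (m k j) (ginv (m i j)) * g k i * m k j) /\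
     (* (iv) *)
     (cj (m j k) (m i j) = m i k * m j k * m k j * ginv (m i k) * cjn (m k j) (m i j) /\
      cj (m j k) (ginv (m i j)) = cjn (m k j) (ginv (m i j)) * ginv (m i k) * m k j
                                    * m j k * m i k /\
      cj (m j k) (g i j) = cj (g j k) (g i j) * cj (m k j) (g i j) * cjn (g k j) (g i j) /\
      cj (m j k) (ginv (g i j)) = cj (g j k) (ginv (g i j)) * cj (m k j) (ginv (g i j))
                                    * cjn (g k j) (ginv (g i j)) /\
      cj (g j k) (m i j) = m i k * g j k * m k j * ginv (m i k) * cjn (m k j) (m i j) /\
      cj (g j k) (ginv (m i j)) = cjn (m k j) (ginv (m i j)) * ginv (m i k) * m k j
                                    * g j k * m i k) /\
     (* (v) *)
     (cj (g k j) (m i j) = cj (m k j) (m i j) * m i k * ginv (m k j) * g k j * ginv (m i k) /\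
      cj (g k j) (ginv (m i j)) = ginv (m i k) * g k j * ginv (m k j) * m i k
                                    * cj (m k j) (ginv (m i j)))).
Proof.
  intros [R3 [R2 R4]]. split.
  -
    intros i j k l Hi Hj Hk Hl Hij Hik Hil Hjk Hjl Hkl _ a b Ha Hb.
    destruct (R4 i j k l Hi Hj Hk Hl Hij Hik Hil Hjk Hjl Hkl) as [Emm [Egg Emg]].
    destruct (R4 k l i j Hk Hl Hi Hj Hkl (not_eq_sym Hik) (not_eq_sym Hjk)
                (not_eq_sym Hil) (not_eq_sym Hjl) Hij) as [_ [_ Egm]].
    apply cj_commute.
    destruct Ha as [-> | ->], Hb as [-> | ->]; auto.
  - intros i j k Hi Hj Hk Hij Hik Hjk _.
    destruct (R3 i j k Hi Hj Hk Hij Hik Hjk) as [Hmmm_ijk [Hmmg_ijk Hgmm_ijk]].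
    destruct (R3 i k j Hi Hk Hj Hik Hij (not_eq_sym Hjk))
      as [Hmmm_ikj [Hmmg_ikj Hgmm_ikj]].
    destruct (R3 k i j Hk Hi Hj (not_eq_sym Hik) (not_eq_sym Hjk) Hij)
      as [Hmmm_kij [Hmmg_kij Hgmm_kij]].
    pose proof (R2 j k Hj Hk Hjk) as Hmg_jk.
    pose proof (R2 k j Hk Hj (not_eq_sym Hjk)) as Hmg_kj.
    split; [| split; [| split]].
    + exact (conj_formulas_ii Hgmm_ijk Hmmm_ikj Hgmm_ikj Hmg_kj).
    + exact (conj_formulas_iii Hmmm_kij Hmmg_kij Hgmm_kij).
    + exact (conj_formulas_iv Hmmm_ijk Hmmg_ijk Hmmm_ikj Hmg_jk).
    + exact (conj_formulas_v Hmmm_ikj Hmmg_ikj).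
Qed.
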